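(* Let $n\ge1$, identify $\mathbb{R}^{n+1}=\mathbb{R}^n\times\mathbb{R}$, and let $K\subset\mathbb{R}^{n+1}$ be a convex compact set. Suppose there exist $x_1\in\mathbb{R}^n$ and real numbers $0<y_1<y_2$ such that $(x_1,y_1)\notin K$ and $(x_1,y_2)\in K$. Then there exist a positive-valued convex (hence continuous) function $f\colon\mathbb{R}^n\to\mathbb{R}$ and a point $x_2\in\mathbb{R}^n$ such that the epigraph $L=\{(x,y)\mid f(x)\le y\}$ is disjoint from $K$ and the vertical line through $x_2$ contains at least two distinct points of the equidistant set $\{K=L\}=\{p\mid d(p,K)=d(p,L)\}$.
   Context: $d(p,A)=\inf\{|p-q|\mid q\in A\}$ (Euclidean distance). *)

From HB Require Import structures.
From mathcomp Require Import all_boot all_order all_algebra.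
From mathcomp Require Import all_classical all_reals all_analysis.
Set Implicit Arguments. Unset Strict Implicit. Unset Printing Implicit Defensive.
Import Order.TTheory GRing.Theory Num.Theory.
Import numFieldNormedType.Exports.
Local Open Scope classical_set_scope.
Local Open Scope ring_scope.

Definition pt (R : realType) (n : nat) := ('rV[R]_n * R)%type.

Definition edist (R : realType) (n : nat) (p q : pt R n) : R :=
  Num.sqrt (\sum_(i < n) (p.1 0 i - q.1 0 i) ^+ 2 + (p.2 - q.2) ^+ 2).

Definition dist_set (R : realType) (n : nat) (p : pt R n) (A : set (pt R n)) : R :=
  inf [set edist p q | q in A].

Definition equidistant (R : realType) (n : nat) (A B : set (pt R n)) : set (pt R n) :=
  [set p | dist_set p A = dist_set p B].

Definition convex_pt (R : realType) (n : nat) (K : set (pt R n)) : Prop :=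
  forall p q, K p -> K q -> forall t : R, 0 <= t <= 1 ->
    K (t *: p.1 + (1 - t) *: q.1, t * p.2 + (1 - t) * q.2).

Definition convex_fun (R : realType) (n : nat) (f : 'rV[R]_n -> R) : Prop :=
  forall x y : 'rV[R]_n, forall t : R, 0 <= t <= 1 ->
    f (t *: x + (1 - t) *: y) <= t * f x + (1 - t) * f y.

Definition epigraph (R : realType) (n : nat) (f : 'rV[R]_n -> R) : set (pt R n) :=
  [set p | f p.1 <= p.2].

From Pilot Require Import Defs.
From HB Require Import structures.
From mathcomp Require Import all_boot all_order all_algebra.
From mathcomp Require Import all_classical all_reals all_analysis.
From mathcomp Require Import ring lra.
Import Order.TTheory GRing.Theory Num.Theory.
Import numFieldNormedType.Exports.
Local Open Scope classical_set_scope.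
Local Open Scope ring_scope.
Set Implicit Arguments. Unset Strict Implicit.

(* Let k0 be the point of K nearest to (x1, y1) and (a, b) := k0 - (x1, y1);
   the hyperplane orthogonal to (a, b) separates (x1, y1) from K, and b > 0
   because (x1, y2) lies in K.  Let x2 be the first coordinate of a point of K
   minimising <a, .> (any nonzero direction will do if a = 0).  Then K lies in
   the half-space <a, x> >= <a, x2> and below some height B, meets the vertical
   line through x2 at a height ys > y1, and stays at positive distance from
   (x2, y1).  The epigraph L of f x = max (y1, B + 1 + M <a, x - x2>) misses K,
   and for M large it passes closer to (x2, y1) than K does.  On the vertical
   line through x2, d(., K) - d(., L) is therefore positive at y1, negative at
   ys and positive high up inside L, so it vanishes twice. *)

Section Euclidean.
Variables (R : realType) (n : nat).
Implicit Types (x y : 'rV[R]_n) (p q r : 'rV[R]_n * R).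

Definition dotr x y : R := \sum_i x 0 i * y 0 i.

Lemma dotrC x y : dotr x y = dotr y x.
Proof. by apply: eq_bigr => i _; rewrite mulrC. Qed.

Lemma dotr_is_scalar x : scalar (dotr x).
Proof.
move=> a y z; rewrite /dotr mulr_sumr -big_split; apply: eq_bigr => i _ /=.
by rewrite !mxE mulrDr mulrCA.
Qed.

HB.instance Definition _ x :=
  GRing.isLinear.Build R 'rV[R]_n R *%R (dotr x) (dotr_is_scalar x).

Lemma dotrZl a x y : dotr (a *: x) y = a * dotr x y.
Proof. by rewrite dotrC linearZ /= dotrC. Qed.

Lemma dotr_ge0 x : 0 <= dotr x x.
Proof. by apply: sumr_ge0 => i _; rewrite -expr2 sqr_ge0. Qed.

Lemma dotr_eq0 x : (dotr x x == 0) = (x == 0).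
Proof.
apply/idP/eqP => [|->]; last by rewrite /dotr big1 // => i _; rewrite mxE mul0r.
have sq_ge0 i : 0 <= x 0 i * x 0 i by rewrite -expr2 sqr_ge0.
move=> /eqP x0; apply/rowP => i; rewrite mxE; apply/eqP.
by rewrite -sqrf_eq0 expr2 (psumr_eq0P (fun j _ => sq_ge0 j) x0).
Qed.

Definition dotp p q : R := dotr p.1 q.1 + p.2 * q.2.

Lemma dotpC p q : dotp p q = dotp q p.
Proof. by rewrite /dotp dotrC mulrC. Qed.

Lemma dotp_is_scalar p : scalar (dotp p).
Proof.
by move=> a q r; rewrite /dotp /= -[a *: q.2]/(a * q.2) linearP /=; ring.
Qed.

HB.instance Definition _ p :=
  GRing.isLinear.Build R ('rV[R]_n * R)%type R *%R (dotp p) (dotp_is_scalar p).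

Lemma dotpZl a p q : dotp (a *: p) q = a * dotp p q.
Proof. by rewrite dotpC linearZ /= dotpC. Qed.

Lemma dotpDl p q r : dotp (p + q) r = dotp p r + dotp q r.
Proof. by rewrite dotpC linearD /= !(dotpC r). Qed.

Lemma dotpDD p q : dotp (p + q) (p + q) = dotp p p + 2 * dotp p q + dotp q q.
Proof. by rewrite dotpDl !linearD /= (dotpC q p); ring. Qed.

Lemma dotp_ge0 p : 0 <= dotp p p.
Proof. by rewrite addr_ge0 ?dotr_ge0 // -expr2 sqr_ge0. Qed.

Lemma dotp_eq0 p : (dotp p p == 0) = (p == 0).
Proof.
rewrite /dotp paddr_eq0 ?dotr_ge0 -?expr2 ?sqr_ge0 // sqrf_eq0 dotr_eq0.
by case: p.
Qed.

Lemma dotp_vertl (c : R) p : dotp (0, c) p = c * p.2.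
Proof. by rewrite /dotp dotrC linear0 add0r. Qed.

Lemma dotp_vertr p x (y y' : R) : dotp p ((x, y) - (x, y')) = p.2 * (y - y').
Proof.
rewrite (_ : _ - _ = (0, y - y')); last by congr (_, _); exact: subrr.
by rewrite /dotp linear0 add0r.
Qed.

Definition normp p : R := Num.sqrt (dotp p p).

Lemma normp_ge0 p : 0 <= normp p.
Proof. exact: sqrtr_ge0. Qed.

Lemma sqr_normp p : normp p ^+ 2 = dotp p p.
Proof. by rewrite sqr_sqrtr ?dotp_ge0. Qed.

Lemma normpZ a p : normp (a *: p) = `|a| * normp p.
Proof. by rewrite /normp dotpZl linearZ /= mulrA -expr2 sqrtrM ?sqr_ge0 // sqrtr_sqr. Qed.

Lemma normp0 : normp 0 = 0.
Proof. by rewrite /normp linear0 sqrtr0. Qed.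

Lemma normpN p : normp (- p) = normp p.
Proof. by rewrite -scaleN1r normpZ normrN1 mul1r. Qed.

Lemma normp_vert (c : R) : normp (0, c) = `|c|.
Proof.
rewrite /normp /dotp /= /dotr big1 ?add0r -?expr2 ?sqrtr_sqr // => i _.
by rewrite mxE mul0r.
Qed.

Lemma dotp_le_normp p q : dotp p q <= normp p * normp q.
Proof.
have [->|p0] := eqVneq p 0; first by rewrite dotpC linear0 mulr_ge0 ?normp_ge0.
have [->|q0] := eqVneq q 0; first by rewrite linear0 mulr_ge0 ?normp_ge0.
have normp_gt0 s : s != 0 -> 0 < normp s.
  by move=> s0; rewrite sqrtr_gt0 lt_neqAle dotp_ge0 andbT eq_sym dotp_eq0.
set a := normp p; set b := normp q.
have ab0 : 0 < a * b by rewrite mulr_gt0 ?normp_gt0.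
have := dotp_ge0 (b *: p + (- a) *: q).
rewrite dotpDD !dotpZl !linearZ /= -!sqr_normp -/a -/b.
nra.
Qed.

Lemma normpD p q : normp (p + q) <= normp p + normp q.
Proof.
rewrite -(ler_pXn2r (_ : 0 < 2)%N) ?nnegrE ?addr_ge0 ?normp_ge0 //.
by rewrite sqr_normp dotpDD sqrrD !sqr_normp mulr2n; have := dotp_le_normp p q; lra.
Qed.

End Euclidean.

Section DistanceToSet.
Variables (R : realType) (n : nat).
Implicit Types (p q r u : 'rV[R]_n * R) (A : set ('rV[R]_n * R)).

Lemma edistE p q : Defs.edist p q = normp (p - q).
Proof.
rewrite /Defs.edist /normp /dotp /dotr -expr2; congr (Num.sqrt (_ + _)).
by apply: eq_bigr => i _; rewrite !mxE expr2.
Qed.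

Lemma edistC p q : Defs.edist p q = Defs.edist q p.
Proof. by rewrite !edistE -normpN opprB. Qed.

Lemma edist_triangle p q r : Defs.edist p r <= Defs.edist p q + Defs.edist q r.
Proof.
by rewrite !edistE (_ : p - r = (p - q) + (q - r)) ?normpD // addrA subrK.
Qed.

Lemma edist_vert (x : 'rV[R]_n) (y y' : R) : Defs.edist (x, y) (x, y') = `|y - y'|.
Proof.
by rewrite edistE (_ : _ - _ = (0, y - y')) ?normp_vert //; congr (_, _); exact: subrr.
Qed.

Lemma dist_set_le A p q : A q -> dist_set p A <= Defs.edist p q.
Proof.
move=> Aq; apply: ge_inf; last by exists q.
by exists 0 => _ [l _ <-]; rewrite edistE normp_ge0.
Qed.

Lemma le_dist_set A p c :
  A !=set0 -> (forall q, A q -> c <= Defs.edist p q) -> c <= dist_set p A.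
Proof.
move=> [q Aq] Ac; apply: lb_le_inf; first by exists (Defs.edist p q), q.
by move=> _ [l Al <-]; exact: Ac.
Qed.

Lemma dist_set_ge0 A p : A !=set0 -> 0 <= dist_set p A.
Proof. by move=> A0; apply: le_dist_set => // q _; rewrite edistE normp_ge0. Qed.

Lemma dist_set_eq0 A p : A p -> dist_set p A = 0.
Proof.
move=> Ap; apply/eqP; rewrite eq_le dist_set_ge0 ?andbT; last by exists p.
by have := dist_set_le p Ap; rewrite edistE subrr normp0.
Qed.

Lemma dist_set_lipschitz A p q :
  A !=set0 -> dist_set p A <= dist_set q A + Defs.edist p q.
Proof.
move=> A0; rewrite -lerBlDr; apply: le_dist_set => // r Ar; rewrite lerBlDr addrC.
exact: le_trans (dist_set_le p Ar) (edist_triangle p q r).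
Qed.

Lemma continuous_dist_set_vert A (x : 'rV[R]_n) :
  A !=set0 -> continuous (fun y => dist_set (x, y) A).
Proof.
move=> A0 y; apply/cvgrPdist_le => e e0.
have lip y1 y2 : dist_set (x, y1) A - dist_set (x, y2) A <= `|y1 - y2|.
  by rewrite lerBlDl -(edist_vert x) dist_set_lipschitz.
near=> y'; apply: (@le_trans _ _ `|y - y'|).
  by rewrite ler_norml lip lerNl opprB distrC lip.
near: y'; exact: (@cvgrPdist_le _ _ _ _ _ id y).1 (@cvg_id _ (nbhs y)) e e0.
Unshelve. all: by end_near.
Qed.

Lemma dist_set_ge_dotp A p u c :
  A !=set0 -> (forall q, A q -> c <= dotp u (q - p)) -> c / normp u <= dist_set p A.
Proof.
move=> A0 Ac; apply: le_dist_set => // q Aq.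
have [u0|u0] := eqVneq (normp u) 0; first by rewrite u0 invr0 mulr0 edistE normp_ge0.
rewrite ler_pdivrMr ?lt_neqAle ?normp_ge0 ?andbT 1?eq_sym // mulrC edistC edistE.
exact: le_trans (Ac q Aq) (dotp_le_normp u (q - p)).
Qed.

Lemma dist_set_ge_vert A p (b : R) :
  A !=set0 -> (forall q, A q -> q.2 <= b) -> p.2 - b <= dist_set p A.
Proof.
move=> A0 Ab; have := @dist_set_ge_dotp A p (0, -1) (p.2 - b) A0.
rewrite normp_vert normrN1 divr1; apply=> q Aq.
by rewrite dotp_vertl /= mulN1r opprB lerD2l lerN2 Ab.
Qed.

End DistanceToSet.

Section Continuity.
Variables (R : realType) (n : nat) (T : topologicalType).

Lemma continuous_dotr (f g : T -> 'rV[R]_n) :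
  continuous f -> continuous g -> continuous (fun t => dotr (f t) (g t)).
Proof.
move=> fc gc t; apply: cvg_big => [[a b]|i _].
  by apply: cvgD; [exact: cvg_fst | exact: cvg_snd].
have coord_c (h : T -> 'rV[R]_n) : continuous h -> continuous (fun t => h t 0 i).
  move=> hc s; apply: (continuous_comp (g := fun M : 'rV[R]_n => M 0 i) (hc s)).
  exact: coord_continuous.
exact: cvgM (coord_c _ fc t) (coord_c _ gc t).
Qed.

Lemma continuous_dotp (f g : T -> 'rV[R]_n * R) :
  continuous f -> continuous g -> continuous (fun t => dotp (f t) (g t)).
Proof.
have fst_c (h : T -> 'rV[R]_n * R) : continuous h -> continuous (fun t => (h t).1).
  by move=> hc t; apply: continuous_comp (hc t) _; exact: cvg_fst.
have snd_c (h : T -> 'rV[R]_n * R) : continuous h -> continuous (fun t => (h t).2).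
  by move=> hc t; apply: continuous_comp (hc t) _; exact: cvg_snd.
move=> fc gc t; apply: cvgD; first exact: continuous_dotr (fst_c _ fc) (fst_c _ gc) t.
by apply: cvgM; [exact: snd_c | exact: snd_c].
Qed.

End Continuity.

Section Separation.
Variables (R : realType) (n : nat) (K : set ('rV[R]_n * R)).
Hypothesis Kconv : convex_pt K.
Implicit Types (p q k : 'rV[R]_n * R).

Lemma nearest_point_obtuse q k0 : K k0 ->
  (forall k, K k -> dotp (k0 - q) (k0 - q) <= dotp (k - q) (k - q)) ->
  forall k, K k -> 0 <= dotp (k0 - q) (k - k0).
Proof.
move=> Kk0 k0min k Kk; set u := k0 - q; set r := k - k0.
have segment t : 0 < t <= 1 -> 0 <= 2 * dotp u r + t * dotp r r.
  move=> /andP[t0 t1].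
  have := k0min _ (Kconv Kk Kk0 (introT andP (conj (ltW t0) t1))).
  have -> : (t *: k.1 + (1 - t) *: k0.1, t * k.2 + (1 - t) * k0.2) - q = u + t *: r.
    congr (_, _); last by rewrite /= -[t *: _]/(t * _); ring.
    by apply/rowP => i; rewrite !mxE /=; ring.
  rewrite -/u (dotpDD u) dotpZl !linearZ /= => le_uu.
  by rewrite -(pmulr_rge0 _ t0); lra.
apply/ler_addgt0Pr => e e0.
have De0 : 0 < dotp r r + e by rewrite ltr_wpDl ?dotp_ge0.
set t := e / (dotp r r + e).
have t0 : 0 < t by rewrite divr_gt0.
have t1 : t <= 1 by rewrite ler_pdivrMr // mul1r; have := dotp_ge0 r; lra.
have := segment t (introT andP (conj t0 t1)).
have : t * dotp r r <= e.
  by rewrite mulrAC ler_pdivrMr //; have := dotp_ge0 r; nra.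
lra.
Qed.

Lemma separate_point_convex_compact q : compact K -> K !=set0 -> ~ K q ->
  exists u, 0 < dotp u u /\ forall k, K k -> dotp u u <= dotp u (k - q).
Proof.
move=> Kcpt K0 Kq.
have sub_q_c : continuous (fun k : 'rV[R]_n * R => k - q).
  by move=> k; apply: cvgB; [exact: cvg_id | exact: cvg_cst].
have [k0 /set_mem Kk0 k0min] := compact_EVT_min K0 Kcpt
  (continuous_subspaceT (continuous_dotp sub_q_c sub_q_c)).
exists (k0 - q); split.
  rewrite lt_neqAle dotp_ge0 andbT eq_sym dotp_eq0 subr_eq0.
  by apply: contraPneq Kq => <-.
move=> k Kk; have := nearest_point_obtuse Kk0 (fun k Kk => k0min k (mem_set Kk)) Kk.
by rewrite -[k - q](subrK k0) -addrA linearD /=; lra.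
Qed.

End Separation.

Section ConvexFunctions.
Variables (R : realType) (n : nat).
Implicit Types f g : 'rV[R]_n -> R.

Lemma convex_fun_cst c : convex_fun (fun _ : 'rV[R]_n => c).
Proof. by move=> x y t _; rewrite -mulrDl addrC subrK mul1r. Qed.

Lemma convex_fun_affine (c : R) (w : 'rV[R]_n) : convex_fun (fun x => c + dotr w x).
Proof. by move=> x y t _; rewrite linearD !linearZ /=; lra. Qed.

Lemma convex_fun_max f g :
  convex_fun f -> convex_fun g -> convex_fun (fun x => Num.max (f x) (g x)).
Proof.
move=> fc gc x y t t01; have /andP[t0 t1] := t01.
have t1' : 0 <= 1 - t by rewrite subr_ge0.
rewrite ge_max; apply/andP; split.
- apply: le_trans (fc x y t t01) _.
  by apply: lerD; apply: ler_wpM2l; rewrite // le_max lexx.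
- apply: le_trans (gc x y t t01) _.
  by apply: lerD; apply: ler_wpM2l; rewrite // le_max lexx orbT.
Qed.

End ConvexFunctions.

Lemma two_roots (R : realType) (g : R -> R) a b c :
  continuous g -> a < b -> b < c -> 0 < g a -> g b < 0 -> 0 < g c ->
  exists z z', z <> z' /\ g z = 0 /\ g z' = 0.
Proof.
move=> gc ab bc ga gb gc'.
have [z] : exists2 z, z \in `[a, b] & g z = 0.
  apply: IVT; first exact: ltW.
    exact: continuous_subspaceT.
  by rewrite ge_min le_max (ltW gb) (ltW ga) orbT.
rewrite in_itv /= => /andP[_ zb] gz.
have [z'] : exists2 z', z' \in `[b, c] & g z' = 0.
  apply: IVT; first exact: ltW.
    exact: continuous_subspaceT.
  by rewrite ge_min le_max (ltW gb) (ltW gc') orbT.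
rewrite in_itv /= => /andP[bz' _] gz'.
exists z, z'; split=> // zz'; move: zb; rewrite zz' => z'b.
by move: gb; rewrite (_ : b = z') ?gz' ?ltxx //; apply/eqP; rewrite eq_le bz' z'b.
Qed.

Lemma equidistant_vert_two_points (R : realType) n (A B : set ('rV[R]_n * R)) x a b c :
  A !=set0 -> B !=set0 -> a < b -> b < c ->
  dist_set (x, a) B < dist_set (x, a) A -> dist_set (x, b) A < dist_set (x, b) B ->
  dist_set (x, c) B < dist_set (x, c) A ->
  exists y y', y <> y' /\ equidistant A B (x, y) /\ equidistant A B (x, y').
Proof.
move=> A0 B0 ab bc ga gb gc.
have g_c : continuous (fun y => dist_set (x, y) A - dist_set (x, y) B).
  by move=> y; apply: cvgB; exact: continuous_dist_set_vert.
have := two_roots g_c ab bc; rewrite !subr_gt0 subr_lt0.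
move=> /(_ ga gb gc) [y [y' [yy' [/eqP gy /eqP gy']]]].
by exists y, y'; split; [|split; apply/eqP; rewrite -subr_eq0].
Qed.

Lemma vertical_support_point (R : realType) n (K : set ('rV[R]_n * R)) x1 y1 y2 :
  (0 < n)%N -> convex_pt K -> compact K -> y1 < y2 -> ~ K (x1, y1) -> K (x1, y2) ->
  exists v x2 ys, [/\ v != 0, K (x2, ys), y1 < ys, 0 < dist_set (x2, y1) K
    & forall k, K k -> dotr v x2 <= dotr v k.1].
Proof.
move=> n_gt0 Kconv Kcpt y12 Kq Kx1; have K0 : K !=set0 by exists (x1, y2).
have [[a b] [u_gt0 sep]] := separate_point_convex_compact Kconv Kcpt K0 Kq.
have b_gt0 : 0 < b.
  have := lt_le_trans u_gt0 (sep _ Kx1); rewrite dotp_vertr /=.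
  by rewrite pmulr_lgt0 // subr_gt0.
(* This is where n >= 1 is used. *)
pose v := if a == 0 then const_mx 1 else a.
have v0 : v != 0.
  rewrite /v; have [_|//] := eqVneq a 0.
  by apply/eqP => /rowP/(_ (Ordinal n_gt0)); rewrite !mxE; apply/eqP; exact: oner_neq0.
have v_a x x' : dotr v x <= dotr v x' -> dotr a x <= dotr a x'.
  by rewrite /v; have [->|//] := eqVneq a 0; rewrite ![dotr 0 _]dotrC !linear0.
have vc : continuous (fun k : 'rV[R]_n * R => dotr v k.1).
  by apply: continuous_dotr => k; [exact: cvg_cst | exact: cvg_fst].
have [[x2 ys] /set_mem Kys ks_min] := compact_EVT_min K0 Kcpt (continuous_subspaceT vc).
have Kv k : K k -> dotr v x2 <= dotr v k.1 := fun Kk => ks_min k (mem_set Kk).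
have sep2 k : K k -> dotp (a, b) (a, b) <= dotp (a, b) (k - (x2, y1)).
  move=> Kk; have := sep _ Kk.
  rewrite -[dotp _ (k - (x1, y1))]/(dotr a (k.1 - x1) + b * (k.2 - y1)).
  rewrite -[dotp _ (k - (x2, y1))]/(dotr a (k.1 - x2) + b * (k.2 - y1)) !linearB /=.
  have := v_a _ _ (Kv _ Kx1); lra.
exists v, x2, ys; split => //.
  have := lt_le_trans u_gt0 (sep2 _ Kys); rewrite dotp_vertr /=.
  by rewrite pmulr_rgt0 // subr_gt0.
apply: lt_le_trans (dist_set_ge_dotp K0 sep2).
by rewrite divr_gt0 // sqrtr_gt0.
Qed.

Section EpigraphConstruction.
Variables (R : realType) (n : nat) (K : set ('rV[R]_n * R)).
Variables (v x2 : 'rV[R]_n) (y1 ys B : R).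
Hypotheses (v0 : v != 0) (y1_gt0 : 0 < y1) (y1_ys : y1 < ys) (Kys : K (x2, ys)).
Hypotheses (dK_gt0 : 0 < dist_set (x2, y1) K) (K_le_B : forall k, K k -> k.2 <= B).
Hypothesis K_support : forall k, K k -> dotr v x2 <= dotr v k.1.

(* The point (x2 - t v, y1) lies in the epigraph of f, at distance
   t |v| < d((x2, y1), K) from (x2, y1). *)
Let t := dist_set (x2, y1) K / (normp (v, 0 : R) + 1).
Let M := (B + 1 - y1) / (t * dotr v v).
Let f x := Num.max y1 (B + 1 - M * dotr v x2 + dotr (M *: v) x).

Let t_gt0 : 0 < t.
Proof. by rewrite divr_gt0 // ltr_wpDl ?normp_ge0. Qed.

Let vv_gt0 : 0 < dotr v v.
Proof. by rewrite lt_neqAle dotr_ge0 andbT eq_sym dotr_eq0. Qed.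

Let ys_le_B : ys <= B.
Proof. exact: K_le_B Kys. Qed.

Let M_gt0 : 0 < M.
Proof.
have h : 0 < B + 1 - y1 by have := ys_le_B; have := y1_ys; lra.
exact: divr_gt0 h (mulr_gt0 t_gt0 vv_gt0).
Qed.

Let epigraph_above x y :
  epigraph f (x, y) -> B + 1 + M * (dotr v x - dotr v x2) <= y.
Proof.
by rewrite /epigraph /f /= ge_max dotrZl => /andP[_ h]; apply: le_trans h; lra.
Qed.

Let K_epigraph_disjoint : K `&` epigraph f = set0.
Proof.
apply/seteqP; split => // -[x y] [Kxy /epigraph_above].
have := K_le_B Kxy; have := K_support Kxy; rewrite /= -subr_ge0 => vx.
have := mulr_ge0 (ltW M_gt0) vx; lra.
Qed.

Let dist_epigraph_lt : dist_set (x2, y1) (epigraph f) < dist_set (x2, y1) K.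
Proof.
have near : epigraph f (x2 - t *: v, y1).
  rewrite /epigraph /f /= ge_max lexx /= dotrZl.
  have -> : dotr v (x2 - t *: v) = dotr v x2 - t * dotr v v by rewrite linearB linearZ.
  have : M * (t * dotr v v) = B + 1 - y1 by rewrite divfK // mulf_neq0 ?gt_eqF.
  lra.
apply: le_lt_trans (dist_set_le _ near) _.
rewrite edistE (_ : _ - _ = t *: (v, 0)); last first.
  congr (_, _); first by change (x2 - (x2 - t *: v) = t *: v); rewrite opprB addrC subrK.
  by change (y1 - y1 = t * 0); rewrite subrr mulr0.
rewrite normpZ gtr0_norm // /t mulrAC ltr_pdivrMr ?ltr_wpDl ?normp_ge0 //.
by rewrite ltr_pM2l // ltrDl ltr01.
Qed.

Let dist_epigraph_gt0 : 0 < dist_set (x2, ys) (epigraph f).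
Proof.
have L0 : epigraph f !=set0 by exists (x2, f x2); rewrite /epigraph /=.
apply: lt_le_trans (@dist_set_ge_dotp _ _ _ _ ((- M) *: v, 1) 1 L0 _).
  by rewrite divr_gt0 // sqrtr_gt0 /dotp /= mulr1 ltr_wpDl ?dotr_ge0.
move=> [x y] /epigraph_above Lxy.
rewrite -[dotp _ _]/(dotr ((- M) *: v) (x - x2) + 1 * (y - ys)) dotrZl linearB /=.
have := ys_le_B; lra.
Qed.

Lemma epigraph_construction : exists f : 'rV[R]_n -> R,
  (forall x, 0 < f x) /\ convex_fun f /\ K `&` epigraph f = set0 /\
  exists y y', y <> y' /\
    equidistant K (epigraph f) (x2, y) /\ equidistant K (epigraph f) (x2, y').
Proof.
have K0 : K !=set0 by exists (x2, ys).
have L0 : epigraph f !=set0 by exists (x2, f x2); rewrite /epigraph /=.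
exists f; split; first by move=> x; rewrite lt_max y1_gt0.
split; first exact: convex_fun_max (convex_fun_cst _) (convex_fun_affine _ _).
split; first exact: K_epigraph_disjoint.
pose Y := Num.max B (f x2) + 1.
have mB : B <= Num.max B (f x2) by rewrite le_max lexx.
have mf : f x2 <= Num.max B (f x2) by rewrite le_max lexx orbT.
have B_Y : B < Y by rewrite /Y; lra.
have LY : epigraph f (x2, Y) by rewrite /epigraph /Y /=; lra.
apply: (equidistant_vert_two_points K0 L0 y1_ys (le_lt_trans ys_le_B B_Y)
  dist_epigraph_lt); first by rewrite (dist_set_eq0 Kys); exact: dist_epigraph_gt0.
rewrite (dist_set_eq0 LY); apply: lt_le_trans (dist_set_ge_vert (x2, Y) K0 K_le_B).
by rewrite subr_gt0.
Qed.

End EpigraphConstruction.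

Unset Implicit Arguments.

Theorem theorem4 (R : realType) (n : nat) (hn : (1 <= n)%N)
  (K : set ('rV[R]_n * R))
  (Kconv : convex_pt K) (Kcpt : compact K)
  (x1 : 'rV[R]_n) (y1 y2 : R)
  (hy1 : 0 < y1) (hy12 : y1 < y2)
  (hout : ~ K (x1, y1)) (hin : K (x1, y2)) :
  exists (f : 'rV[R]_n -> R) (x2 : 'rV[R]_n),
    (forall x, 0 < f x) /\ convex_fun f /\
    K `&` epigraph f = set0 /\
    exists y y' : R, y <> y' /\
      equidistant K (epigraph f) (x2, y) /\
      equidistant K (epigraph f) (x2, y').
Proof.
have K0 : K !=set0 by exists (x1, y2).
have snd_c : continuous (fun k : 'rV[R]_n * R => k.2) by move=> k; exact: cvg_snd.
have [kB _ kB_max] := compact_EVT_max K0 Kcpt (continuous_subspaceT snd_c).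
have [v [x2 [ys [v0 Kys y1_ys dK Kv]]]] :=
  vertical_support_point hn Kconv Kcpt hy12 hout hin.
have [f f_props] := epigraph_construction v0 hy1 y1_ys Kys dK
  (fun k Kk => kB_max k (mem_set Kk)) Kv.
by exists f, x2.
Qed.
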